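(* A simple binary matroid is chordal if and only if it does not have $U_{3,4}$ as an induced minor.
   Context: A matroid $M$ is chordal if, for each circuit $C$ of $M$ with at least four elements, there are circuits $C_1$ and $C_2$ and an element $e$ such that $C_1\cap C_2=\{e\}$ and $C=(C_1\cup C_2)-e$. An induced minor of $M$ is a matroid obtained from $M$ by a sequence of restrictions to flats and contractions, each contraction followed by simplification. *)

From mathcomp Require Import all_boot all_order all_algebra.
Set Implicit Arguments. Unset Strict Implicit. Unset Printing Implicit Defensive.
Import GRing.Theory.

Section Matroids.
Variable T : finType.

Definition is_matroid (E : {set T}) (I : {set T} -> bool) : Prop :=
  [/\ (forall X : {set T}, I X -> X \subset E),
      I set0,
      (forall X Y : {set T}, Y \subset X -> I X -> I Y) &
      (forall X Y : {set T}, I X -> I Y -> #|X| < #|Y| ->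
         exists2 y, y \in Y :\: X & I (y |: X))].

Definition rk (I : {set T} -> bool) (X : {set T}) : nat :=
  \max_(Y : {set T} | (Y \subset X) && I Y) #|Y|.

Definition circuit (E : {set T}) (I : {set T} -> bool) (C : {set T}) : Prop :=
  [/\ C \subset E, ~~ I C & forall D : {set T}, D \proper C -> I D].

Definition loop (E : {set T}) (I : {set T} -> bool) (e : T) : Prop :=
  e \in E /\ ~~ I [set e].

Definition parallel (E : {set T}) (I : {set T} -> bool) (e f : T) : Prop :=
  [/\ [&& e \in E, f \in E & e != f], I [set e], I [set f] & ~~ I [set e; f]].

Definition simple (E : {set T}) (I : {set T} -> bool) : Prop :=
  (forall e, ~ loop E I e) /\ (forall e f, ~ parallel E I e f).

Definition flat (E : {set T}) (I : {set T} -> bool) (F : {set T}) : Prop :=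
  F \subset E /\ forall e, e \in E :\: F -> rk I F < rk I (e |: F).

Definition restr (I : {set T} -> bool) (S : {set T}) : {set T} -> bool :=
  fun X => I X && (X \subset S).

Definition contr (E : {set T}) (I : {set T} -> bool) (C : {set T}) :
  {set T} -> bool :=
  fun X => (X \subset E :\: C) && (rk I (X :|: C) == #|X| + rk I C).

(* The simplification is then restr I S. *)
Definition simplification_set (E : {set T}) (I : {set T} -> bool)
  (S : {set T}) : Prop :=
  [/\ S \subset E,
      (forall e, e \in S -> ~ loop E I e),
      (forall e f, e \in S -> f \in S -> ~ parallel E I e f) &
      (forall e, e \in E -> ~ loop E I e -> e \notin S ->
         exists2 f, f \in S & parallel E I e f)].

Inductive induced_minor (E : {set T}) (I : {set T} -> bool) :
  {set T} -> ({set T} -> bool) -> Prop :=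
| im_refl : induced_minor E I E I
| im_flat E' I' (F : {set T}) : induced_minor E I E' I' -> flat E' I' F ->
    induced_minor E I F (restr I' F)
| im_contr E' I' (C S : {set T}) : induced_minor E I E' I' -> C \subset E' ->
    simplification_set (E' :\: C) (contr E' I' C) S ->
    induced_minor E I S (restr (contr E' I' C) S).

Definition isU34 (E : {set T}) (I : {set T} -> bool) : Prop :=
  #|E| = 4 /\ forall X : {set T}, X \subset E -> I X = (#|X| <= 3).

Definition binary (E : {set T}) (I : {set T} -> bool) : Prop :=
  exists (n : nat) (v : T -> 'rV['F_2]_n),
    forall X : {set T}, X \subset E -> I X = free [seq v x | x <- enum X].

Definition chordal (E : {set T}) (I : {set T} -> bool) : Prop :=
  forall C : {set T}, circuit E I C -> 4 <= #|C| ->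
    exists (C1 C2 : {set T}) (e : T), [/\ circuit E I C1, circuit E I C2,
      C1 :&: C2 = [set e] & C = (C1 :|: C2) :\ e].

End Matroids.

From mathcomp Require Import all_boot all_order all_algebra.
From mathcomp Require Import zify.
From Stdlib Require Import Classical.
Set Implicit Arguments. Unset Strict Implicit. Unset Printing Implicit Defensive.
Import GRing.Theory.

(** Over GF(2) a set of vectors is dependent iff some nonempty subset sums to
    zero, so a binary matroid from which a set G has been contracted is
    described by subset sums modulo the span of G.  Call f a chord of a
    circuit D (modulo G) if f is a non-loop outside D, in the closure of D,
    and parallel to no element of D.  Writing v for the representation,
    v f + Σ_{a ∈ A} v a then lies in the span of v G for some A ⊂ D, and
    f ∪ A, f ∪ (D - A) are circuits meeting in f: in a simple binary matroid,
    chords are exactly what chordality asks for.  The property "every circuit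
    with at least four elements has a chord" passes to restrictions to flats,
    to simplifications and to contractions, and fails for U_{3,4}.
    Conversely, a chordless circuit C with |C| >= 4 is a flat; restricting to
    it and contracting all but four of its elements leaves U_{3,4}. *)

Lemma subsetU1_notin (T : finType) (a : T) (A B : {set T}) :
  A \subset a |: B -> a \notin A -> A \subset B.
Proof.
move=> /subsetP AaB aNA; apply/subsetP => x xA.
by have /setU1P[xa | //] := AaB x xA; rewrite -xa xA in aNA.
Qed.

Section Matroids.
Variable T : finType.
Implicit Types (C E F X Y Z : {set T}) (I : {set T} -> bool).

Lemma rk_ge I X Y : Y \subset X -> I Y -> #|Y| <= rk I X.
Proof. by move=> YX IY; apply: (@leq_bigmax_cond _ _ _ Y); rewrite YX IY. Qed.

Lemma rk_le I X m : (forall Y, Y \subset X -> I Y -> #|Y| <= m) -> rk I X <= m.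
Proof. by move=> Ym; apply/bigmax_leqP => Y /andP[]; apply: Ym. Qed.

Lemma rk_witness I X : I set0 -> exists Y, [/\ Y \subset X, I Y & #|Y| = rk I X].
Proof.
move=> I0; have : 0 < #|[pred Y : {set T} | (Y \subset X) && I Y]|.
  by apply/card_gt0P; exists set0; rewrite inE sub0set I0.
case/(eq_bigmax_cond (fun Y : {set T} => #|Y|)) => Y; rewrite inE => /andP[YX IY] rkY.
by exists Y; split; rewrite // /rk rkY.
Qed.

Lemma rk_setU_le I X C : (forall Y Z, Z \subset Y -> I Y -> I Z) ->
  rk I (X :|: C) <= #|X| + rk I C.
Proof.
move=> Isub; apply: rk_le => Y YXC IY; rewrite -(cardsID X Y) leq_add //.
  exact/subset_leq_card/subsetIr.
apply: rk_ge (Isub _ _ (subsetDl Y X) IY).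
by apply/subsetP => y /setDP[/(subsetP YXC)/setUP[] // yX /negP].
Qed.

Lemma rk_restr I F X : X \subset F -> rk (restr I F) X = rk I X.
Proof.
move=> XF; apply: eq_bigl => Y; rewrite /restr.
by case YX: (Y \subset X); rewrite //= (subset_trans YX XF) andbT.
Qed.

Lemma circuit_neq0 E I C : I set0 -> circuit E I C -> C != set0.
Proof. by move=> I0 [_ nIC _]; apply: contraNneq nIC => ->. Qed.

(* The truncated subtraction makes this correct even for C = set0. *)
Lemma rk_circuit E I C X : circuit E I C -> X \subset C -> rk I X = #|X| - (X == C).
Proof.
move=> [_ nIC Cmin] XC; apply/eqP; rewrite eqn_leq.
have [-> | neXC] := eqVneq X C; last first.
  rewrite subn0 (rk_le (fun Y YX _ => subset_leq_card YX)).
  by rewrite rk_ge // Cmin // properEneq neXC.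
apply/andP; split.
  apply: rk_le => Y YC IY; suff: #|Y| < #|C| by lia.
  by apply: proper_card; rewrite properEneq YC andbT; apply: contraTneq IY => ->.
have [-> | [c cC]] := set_0Vmem C; first by rewrite cards0.
by rewrite (cardsD1 c C) cC /= add1n subn1 rk_ge ?subsetDl // Cmin // properD1.
Qed.

Lemma contr_restr_circuit E I C C0 X : circuit E I C -> C0 \proper C ->
  X \subset C :\: C0 -> contr C (restr I C) C0 X = (X != C :\: C0).
Proof.
move=> circC C0C XCC0; have C0sub := proper_sub C0C.
have /andP[XC XC0] : (X \subset C) && [disjoint X & C0] by rewrite -subsetD.
have XC0C : X :|: C0 \subset C by rewrite subUset XC.
rewrite /contr XCC0 !rk_restr // !(rk_circuit circC) // (negbTE (proper_neq C0C)).
rewrite cardsU (disjoint_setI0 XC0) cards0 !subn0.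
have -> : (X :|: C0 == C) = (X == C :\: C0).
  apply/eqP/eqP => [<- | ->]; last by rewrite setUC -{2}(setID C C0) (setIidPr C0sub).
  by rewrite setDUl setDv setU0; apply/esym/setDidPl.
have [-> | _] := eqVneq X (C :\: C0); last by rewrite subn0 eqxx.
by rewrite cardsDS //; have := proper_card C0C; lia.
Qed.

Lemma simple_indep1 E I e : simple E I -> e \in E -> I [set e].
Proof.
by move=> [noloop _] eE; apply: contraT => nIe; exfalso; apply: (noloop e).
Qed.

Lemma simple_indep2 E I e f : simple E I -> e \in E -> f \in E -> e != f ->
  I [set e; f].
Proof.
move=> simpleI eE fE ef; apply: contraT => nIef; have [_ nopar] := simpleI.
exfalso; apply: (nopar e f).
by split; rewrite ?eE ?fE ?ef //; apply: simple_indep1 simpleI _.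
Qed.

Lemma circuit_flat_U34_minor E I C : circuit E I C -> 3 < #|C| -> flat E I C ->
  exists E' I', induced_minor E I E' I' /\ isU34 E' I'.
Proof.
move=> circC C4 flatC.
pose S := [set:: take 4 (enum C)].
have SC : S \subset C by apply/subsetP => x; rewrite inE => /mem_take; rewrite mem_enum.
have S4 : #|S| = 4.
  by rewrite cardsE (card_uniqP _) ?take_uniq ?enum_uniq // size_takel // -cardE.
pose C0 := C :\: S.
have C0C : C0 \proper C.
  by rewrite properEcard subsetDl cardsDS // S4; lia.
have CC0 : C :\: C0 = S by rewrite setDDr setDv set0U (setIidPr SC).
pose I' := contr C (restr I C) C0.
have I'S X : X \subset S -> I' X = (#|X| <= 3).
  move=> XS; rewrite /I' (contr_restr_circuit circC C0C) ?CC0 //.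
  by rewrite eqEcard XS S4 -ltnNge.
exists S, (restr I' S); split.
  apply: (im_contr (im_flat (im_refl E I) flatC) (proper_sub C0C)); rewrite -/I' CC0.
  split => // [e eS [_] | e f eS fS [_ _ _] | e _ _ /negP //].
    by rewrite I'S ?sub1set ?cards1.
  by rewrite I'S ?cards2 ?subUset ?sub1set ?eS ?fS //; case: (e != f).
by split => // X XS; rewrite /restr XS andbT I'S.
Qed.

End Matroids.

Section SubsetSums.
Variables (T : finType) (V : lmodType 'F_2) (v : T -> V).
Implicit Types (A B C D E F G K S X Y Z : {set T}) (x y z : V).
Local Open Scope ring_scope.

Lemma addxx x : x + x = 0.
Proof. by rewrite -mulr2n -scaler_nat (pcharf0 (pchar_Fp (isT : prime 2))) scale0r. Qed.

Lemma addKx x y : x + (x + y) = y.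
Proof. by rewrite addrA addxx add0r. Qed.

Lemma addxK x y : y + x + x = y.
Proof. by rewrite -addrA addxx addr0. Qed.

Definition vsum A := \sum_(a in A) v a.

Lemma vsum0 : vsum set0 = 0.
Proof. exact: big_set0. Qed.

Lemma vsum1 a : vsum [set a] = v a.
Proof. exact: big_set1. Qed.

Lemma vsumU1 a A : a \notin A -> vsum (a |: A) = v a + vsum A.
Proof. exact: big_setU1. Qed.

Lemma vsumD1 a A : a \in A -> vsum A = v a + vsum (A :\ a).
Proof. exact: big_setD1. Qed.

Lemma vsumID A B : vsum A = vsum (A :&: B) + vsum (A :\: B).
Proof. exact: big_setID. Qed.

Lemma vsumU A B : [disjoint A & B] -> vsum (A :|: B) = vsum A + vsum B.
Proof.
move=> AB; rewrite (vsumID _ A) setUK setDUl setDv set0U.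
by rewrite disjoint_sym in AB; rewrite (setDidPl AB).
Qed.

Lemma vsumD A B : B \subset A -> vsum (A :\: B) = vsum A + vsum B.
Proof. by move=> BA; rewrite (vsumID A B) (setIidPr BA) addrC addKx. Qed.

Lemma vsum_symdiff A B : vsum ((A :\: B) :|: (B :\: A)) = vsum A + vsum B.
Proof.
rewrite vsumU; last first.
  by rewrite disjoint_sym (disjointWr (subsetDr A B)) // disjoints_subset setCK subsetDl.
by rewrite (vsumID A B) (vsumID B A) setIC addrACA addxx add0r.
Qed.

(* Over GF(2) linear combinations are subset sums: [spanned K x] says that [x]
   lies in the span of [v @: K]. *)
Definition spanned K x := exists2 A : {set T}, A \subset K & x = vsum A.

Lemma spanned0 K : spanned K 0.
Proof. by exists set0; rewrite ?sub0set ?vsum0. Qed.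

Lemma spanned_vsum K A : A \subset K -> spanned K (vsum A).
Proof. by exists A. Qed.

Lemma spanned_gen K k : k \in K -> spanned K (v k).
Proof. by move=> kK; exists [set k]; rewrite ?sub1set ?vsum1. Qed.

Lemma spannedS K K' x : K \subset K' -> spanned K x -> spanned K' x.
Proof. by move=> KK' [A AK ->]; apply/spanned_vsum/(subset_trans AK). Qed.

Lemma spannedD K x y : spanned K x -> spanned K y -> spanned K (x + y).
Proof.
move=> [A AK ->] [B BK ->]; rewrite -vsum_symdiff; apply: spanned_vsum.
by rewrite subUset !(subset_trans (subsetDl _ _)).
Qed.

Lemma spannedDl K x y : spanned K y -> spanned K (x + y) -> spanned K x.
Proof. by move=> Ky Kxy; rewrite -(addxK y x); apply: spannedD. Qed.

Lemma spanned_addr_trans K x y z :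
  spanned K (x + y) -> spanned K (y + z) -> spanned K (x + z).
Proof. by move=> Kxy Kyz; have := spannedD Kxy Kyz; rewrite addrA addxK. Qed.

Lemma spanned_trans K K' x :
  (forall k, k \in K' -> spanned K (v k)) -> spanned K' x -> spanned K x.
Proof.
move=> K'K [A AK' ->]; apply: big_ind => [|y z|a aA]; first exact: spanned0.
  exact: spannedD.
exact/K'K/(subsetP AK').
Qed.

Lemma spannedU B G x :
  spanned (B :|: G) x <-> exists2 A : {set T}, A \subset B & spanned G (x + vsum A).
Proof.
split => [[A0 A0BG ->] | [A AB GxA]].
  exists (A0 :&: B); first exact: subsetIr.
  rewrite (vsumID A0 B) addrC addKx; apply: spanned_vsum.
  by apply/subsetP => a /setDP[/(subsetP A0BG)/setUP[] // aB /negP].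
rewrite -(addxK (vsum A) x); apply: spannedD; first exact: spannedS (subsetUr B G) GxA.
exact/spanned_vsum/(subset_trans AB (subsetUl B G)).
Qed.

Lemma spannedU1 c G x : spanned (c |: G) x <-> spanned G x \/ spanned G (x + v c).
Proof.
rewrite spannedU; split => [[A] | [Gx | Gxc]].
- by rewrite subset1 => /orP[] /eqP ->; rewrite ?vsum1 ?vsum0 ?addr0; auto.
- by exists set0; rewrite ?sub0set // vsum0 addr0.
- by exists [set c]; rewrite ?vsum1.
Qed.

(* The [_mod G] notions live in the matroid represented by [v] after contracting
   [G], where vectors are read modulo the span of [v @: G]. *)
Definition free_mod G X := forall Y, Y \subset X -> spanned G (vsum Y) -> Y = set0.

Lemma free_mod0 G : free_mod G set0.
Proof. by move=> Y; rewrite subset0 => /eqP ->. Qed.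

Lemma free_modS G X X' : X' \subset X -> free_mod G X -> free_mod G X'.
Proof. by move=> X'X freeX Y YX'; apply/freeX/(subset_trans YX'). Qed.

Lemma free_mod_spanned G G' X :
  (forall k, k \in G' -> spanned G (v k)) -> free_mod G X -> free_mod G' X.
Proof. by move=> G'G freeX Y YX /(spanned_trans G'G); apply: freeX. Qed.

Lemma free_modW G G' X : G \subset G' -> free_mod G' X -> free_mod G X.
Proof. by move=> GG'; apply: free_mod_spanned => k /(subsetP GG')/spanned_gen. Qed.

Lemma free_mod_setU G X B : [disjoint X & B] -> free_mod G B ->
  free_mod G (X :|: B) <-> free_mod (B :|: G) X.
Proof.
move=> XB freeB; split => [freeXB Y YX /spannedU[A AB GYA] | freeX Y YXB GY].
  have YA : [disjoint Y & A] := disjointWl YX (disjointWr AB XB).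
  have := freeXB (Y :|: A) (setUSS YX AB); rewrite vsumU // => /(_ GYA)/eqP.
  by rewrite setU_eq0 => /andP[/eqP].
have YB : Y :\: B = set0.
  apply: freeX; first by apply/subsetP => y /setDP[/(subsetP YXB)/setUP[] // yB /negP].
  by apply/spannedU; exists (Y :&: B); rewrite ?subsetIr // addrC -vsumID.
by apply: freeB GY; rewrite -setD_eq0 YB.
Qed.

Lemma free_mod1 G f : free_mod G [set f] <-> ~ spanned G (v f).
Proof.
split => [free1 Gf | nGf Y].
  by have := free1 _ (subxx _); rewrite vsum1 => /(_ Gf)/setP/(_ f); rewrite !inE eqxx.
by rewrite subset1 => /orP[] /eqP -> //; rewrite vsum1.
Qed.

Lemma free_mod2 G e f : e != f -> free_mod G [set e; f] <->
  [/\ ~ spanned G (v e), ~ spanned G (v f) & ~ spanned G (v e + v f)].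
Proof.
move=> ef; have ef' : [disjoint [set e] & [set f]] by rewrite disjoints1 inE.
split => [freeEF | [nGe nGf nGef]].
  have /free_mod1 nGf := free_modS (subsetUr [set e] [set f]) freeEF.
  have /free_mod1 := (free_mod_setU ef' ((free_mod1 _ _).2 nGf)).1 freeEF.
  by rewrite spannedU1 => nGfe; split => // ?; apply: nGfe; auto.
apply/(free_mod_setU ef' ((free_mod1 _ _).2 nGf))/free_mod1.
by case/spannedU1.
Qed.

Definition circuit_mod G E D := [/\ D \subset E, spanned G (vsum D) &
  forall Y, Y \proper D -> spanned G (vsum Y) -> Y = set0].

Definition chord_mod G E D f := [/\ f \in E :\: D, ~ spanned G (v f),
  forall d, d \in D -> ~ spanned G (v f + v d) & spanned (D :|: G) (v f)].

Lemma circuit_mod_split G E C e A : circuit_mod G E C -> e \in E :\: C ->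
  A \proper C -> spanned G (v e + vsum A) -> circuit_mod G E (e |: A).
Proof.
move=> [CE _ Cmin] /setDP[eE eNC] AC GeA; have AsubC := proper_sub AC.
have eNA : e \notin A by apply: contra eNC; apply: (subsetP AsubC).
split; first by rewrite subUset sub1set eE (subset_trans AsubC CE).
  by rewrite vsumU1.
move=> Y YeA GY; have [eY | eNY] := boolP (e \in Y); last first.
  apply: Cmin GY; apply: sub_proper_trans AC.
  exact: subsetU1_notin (proper_sub YeA) eNY.
have YA : Y :\ e \subset A.
  apply/subsetP => y /setD1P[ye /(subsetP (proper_sub YeA))/setU1P[/eqP|//]].
  by rewrite (negbTE ye).
have /Cmin : A :\: (Y :\ e) \proper C by apply: sub_proper_trans AC; apply: subsetDl.
have -> : vsum (A :\: (Y :\ e)) = (v e + vsum A) + vsum Y.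
  by rewrite vsumD // (vsumD1 eY) addrACA addxx add0r.
move=> /(_ (spannedD GeA GY))/eqP; rewrite setD_eq0 => AYe.
have := proper_neq YeA; rewrite eqEsubset (proper_sub YeA) /=.
by rewrite -(setD1K eY) setUS.
Qed.

Lemma chord_mod_parallel G E E' D f g : chord_mod G E D f -> g \in E' ->
  spanned G (v f + v g) -> chord_mod G E' D g.
Proof.
move=> [/setDP[_ fND] fNloop fNpar fcl] gE' Gfg; split.
- by rewrite inE gE' andbT; apply/negP => gD; apply: fNpar gD Gfg.
- by move=> Gg; apply: fNloop; apply: spannedDl Gg Gfg.
- by move=> d dD Ggd; apply: (fNpar d dD); apply: spanned_addr_trans Gfg Ggd.
- by rewrite -(addKx (v f) (v g)); apply: spannedD fcl (spannedS (subsetUr D G) Gfg).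
Qed.

Lemma chord_mod_swap G E D d f g : d \in D -> f \notin D -> spanned G (v f + v d) ->
  chord_mod G E (f |: (D :\ d)) g -> chord_mod G E D g.
Proof.
move=> dD fND Gfd [/setDP[gE gNC2] gNloop gNpar gcl].
have gNf : ~ spanned G (v g + v f) := gNpar f (setU11 f _).
have gNd : ~ spanned G (v g + v d).
  by move=> Ggd; apply: gNf; apply: spanned_addr_trans Ggd _; rewrite addrC.
split => //.
- rewrite inE gE andbT; apply: contraNN gNC2 => gD; rewrite !inE gD andbT.
  by apply/orP; right; apply/eqP => gd; apply: gNd; rewrite gd addxx; apply: spanned0.
- move=> d' d'D; have [-> // | d'd] := eqVneq d' d.
  by apply: gNpar; rewrite !inE d'd d'D orbT.
apply: spanned_trans gcl => k; rewrite !inE -orbA => /or3P[/eqP -> | /andP[_ kD] | kG].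
- apply: (spannedDl (y := v d)); last exact: spannedS (subsetUr D G) Gfd.
  by apply: spanned_gen; rewrite inE dD.
- by apply: spanned_gen; rewrite inE kD.
- by apply: spanned_gen; rewrite inE kG orbT.
Qed.

Lemma spanned_closure_contr G D c : spanned G (vsum D) ->
  (forall Y, Y \proper D -> spanned (c |: G) (vsum Y) -> Y = set0) ->
  spanned (D :|: G) (v c) -> spanned G (v c).
Proof.
move=> GD Dmin /spannedU[A AD GcA].
have [eqAD | neAD] := eqVneq A D; first by rewrite eqAD in GcA; apply: spannedDl GD GcA.
suff A0 : A = set0 by move: GcA; rewrite A0 vsum0 addr0.
by apply: Dmin; [rewrite properEneq neAD | apply/spannedU1; right; rewrite addrC].
Qed.

Lemma chord_mod_contr G E D c f : (spanned (D :|: G) (v c) -> spanned G (v c)) ->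
  chord_mod G E D f -> chord_mod (c |: G) (E :\ c) D f.
Proof.
move=> cl_loop [/setDP[fE fND] fNloop fNpar fcl].
have uncontr x : spanned (D :|: G) x -> spanned (c |: G) x -> spanned G x.
  move=> Dx /spannedU1[// | Gxc]; apply: (spannedDl _ Gxc); apply: cl_loop.
  by rewrite -(addKx x (v c)); apply: spannedD Dx (spannedS (subsetUr D G) Gxc).
split.
- rewrite !inE fE fND andbT; apply/eqP => fc; apply: fNloop.
  by rewrite fc; apply: cl_loop; rewrite -fc.
- by move/(uncontr _ fcl).
- move=> d dD Gcfd; apply: (fNpar d dD); apply: uncontr Gcfd.
  by apply: spannedD fcl (spanned_gen _); rewrite inE dD.
- by apply: spannedS fcl; rewrite setUCA subsetUr.
Qed.

Lemma chord_mod_setU1 G E D c f : chord_mod G E (c |: D) f ->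
  (forall d, d \in D -> ~ spanned G (v f + v d + v c)) ->
  chord_mod (c |: G) (E :\ c) D f.
Proof.
move=> [/setDP[fE fNcD] fNloop fNpar fcl] fNcpar; split.
- by move: fNcD; rewrite !inE negb_or fE andbT => /andP[-> ->].
- by case/spannedU1 => //; apply: fNpar; rewrite setU11.
- by move=> d dD /spannedU1[]; [apply: fNpar; rewrite setU1r | apply: fNcpar].
- by rewrite setUCA setUA.
Qed.

Lemma circuit_mod_setU1 G E D c : c \in E -> circuit_mod (c |: G) (E :\ c) D ->
  ~ spanned G (vsum D) -> circuit_mod G E (c |: D).
Proof.
move=> cE [DEc GcD Dmin] nGD.
have cND : c \notin D by apply/negP => /(subsetP DEc); rewrite !inE eqxx.
have GDc : spanned G (vsum D + v c) by case/spannedU1: GcD.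
split.
- by rewrite subUset sub1set cE (subset_trans DEc (subsetDl _ _)).
- by rewrite vsumU1 // addrC.
move=> Y YcD GY; have YcDsub := proper_sub YcD.
have [cY | cNY] := boolP (c \in Y); last first.
  have YD : Y \subset D := subsetU1_notin YcDsub cNY.
  have [eqYD | neYD] := eqVneq Y D; first by case: nGD; rewrite -eqYD.
  by apply: Dmin (spannedS (subsetUr _ _) GY); rewrite properEneq neYD.
have YcD' : Y :\ c \subset D by rewrite -(setU1K cND) setSD.
have GcYc : spanned (c |: G) (vsum (Y :\ c)).
  by apply/spannedU1; right; rewrite addrC -vsumD1.
have [eqYD | neYD] := eqVneq (Y :\ c) D.
  by case/eqP: (proper_neq YcD); rewrite -eqYD setD1K.
have Yc0 : Y :\ c = set0 by apply: Dmin GcYc; rewrite properEneq neYD.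
by case: nGD; apply: spannedDl GDc; rewrite (vsumD1 cY) Yc0 vsum0 addr0 in GY.
Qed.

Lemma circuit_mod_contr_spanned G E D c : circuit_mod (c |: G) (E :\ c) D ->
  spanned G (vsum D) -> circuit_mod G E D.
Proof.
move=> [DEc _ Dmin] GD; split => //; first exact: subset_trans DEc (subsetDl _ _).
by move=> Y YD GY; apply: Dmin YD (spannedS (subsetUr _ _) GY).
Qed.

Definition chordal_mod G E := forall D, circuit_mod G E D -> (3 < #|D|)%N ->
  exists f, chord_mod G E D f.

(* After contracting [c], the element [f] is parallel to [d]; exchanging [d] for
   [f] in [D] yields a circuit whose sum is already spanned modulo [G]. *)
Lemma chord_mod_contr_exchange G E D c d f : chordal_mod G E ->
  circuit_mod (c |: G) (E :\ c) D -> (3 < #|D|)%N -> spanned G (vsum D + v c) ->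
  d \in D -> f \in (E :\ c) :\: D -> spanned G (v f + v d + v c) ->
  exists g, chord_mod (c |: G) (E :\ c) D g.
Proof.
move=> chE circD D4 GDc dD fEcD Gfdc; have [_ GcD _] := circD.
have fND := (setDP fEcD).2; have fNDd : f \notin D :\ d by rewrite !inE negb_and fND orbT.
have Gcfd : spanned (c |: G) (v f + v d) by apply/spannedU1; right.
have circC2 : circuit_mod (c |: G) (E :\ c) (f |: (D :\ d)).
  apply: circuit_mod_split circD fEcD (properD1 dD) _.
  by move: (spannedD Gcfd GcD); rewrite (vsumD1 dD) -addrA addKx.
have GC2 : spanned G (vsum (f |: (D :\ d))).
  have -> : vsum (f |: (D :\ d)) = (v f + v d + v c) + (vsum D + v c).
    by rewrite addrACA addxx addr0 (vsumD1 dD) -addrA addKx vsumU1.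
  exact: spannedD Gfdc GDc.
have C2_4 : (3 < #|f |: (D :\ d)|)%N by rewrite cardsU1 fNDd (cardsD1 d D) dD in D4 *.
have [g chg] := chE _ (circuit_mod_contr_spanned circC2 GC2) C2_4.
exists g; apply: (chord_mod_swap dD fND Gcfd).
by apply: chord_mod_contr chg; case: circC2 => _ _; apply: spanned_closure_contr GC2.
Qed.

Lemma chordal_mod_contr1 G E c : c \in E -> chordal_mod G E ->
  chordal_mod (c |: G) (E :\ c).
Proof.
move=> cE chE D circD D4; have [_ GcD Dmin] := circD.
have [GD | nGD] := classic (spanned G (vsum D)).
  have [f chf] := chE D (circuit_mod_contr_spanned circD GD) D4.
  by exists f; apply: chord_mod_contr chf; apply: spanned_closure_contr GD Dmin.
have GDc : spanned G (vsum D + v c) by case/spannedU1: GcD.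
have cD4 : (3 < #|c |: D|)%N by apply: leq_trans D4 (subset_leq_card (subsetUr _ _)).
have [f chf] := chE _ (circuit_mod_setU1 cE circD nGD) cD4.
have [[d dD Gfdc] | noPar] := classic (exists2 d, d \in D & spanned G (v f + v d + v c)).
  have [/setDP[fE fNcD] _ _ _] := chf.
  apply: (chord_mod_contr_exchange chE circD D4 GDc dD _ Gfdc).
  by move: fNcD; rewrite !inE negb_or fE andbT => /andP[-> ->].
by exists f; apply: (chord_mod_setU1 chf) => d dD Gfdc; apply: noPar; exists d.
Qed.

Lemma chordal_mod_contr G E C : C \subset E -> chordal_mod G E ->
  chordal_mod (C :|: G) (E :\: C).
Proof.
move=> CE chE; rewrite -[C]set_enum in CE *; move: (enum_uniq C) CE.
elim: (enum C) => [|c s IHs] /=; first by rewrite set_nil set0U setD0.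
case/andP => cNs /IHs{}IHs; rewrite set_cons subUset sub1set => /andP[cE sE].
have -> : E :\: (c |: [set:: s]) = (E :\: [set:: s]) :\ c by rewrite setDDl setUC.
by rewrite -setUA; apply: chordal_mod_contr1 (IHs sE); rewrite !inE cNs.
Qed.

Definition has_chord E (I : {set T} -> bool) C := exists (C1 C2 : {set T}) (e : T),
  [/\ circuit E I C1, circuit E I C2, C1 :&: C2 = [set e] & C = (C1 :|: C2) :\ e].

Definition represents G E (I : {set T} -> bool) :=
  forall X, I X <-> X \subset E /\ free_mod G X.

Section Represented.
Variables (G E : {set T}) (I : {set T} -> bool).
Hypothesis repI : represents G E I.

Lemma represents_set0 : I set0.
Proof. by apply/repI; split; [exact: sub0set | exact: free_mod0]. Qed.

Lemma represents_sub Y Z : Z \subset Y -> I Y -> I Z.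
Proof.
move=> ZY /repI[YE freeY]; apply/repI.
by split; [exact: subset_trans ZY YE | exact: free_modS ZY freeY].
Qed.

Lemma represents_restr F : F \subset E -> represents G F (restr I F).
Proof.
move=> FE X; rewrite /restr; split => [/andP[/repI[_ freeX] XF] // | [XF freeX]].
by rewrite XF andbT; apply/repI; split => //; apply: subset_trans FE.
Qed.

Lemma basis_spanned K B k : K \subset E -> B \subset K -> I B -> #|B| = rk I K ->
  k \in K -> spanned (B :|: G) (v k).
Proof.
move=> KE BK IB rkB kK; have [kB | kNB] := boolP (k \in B).
  by apply: spanned_gen; rewrite inE kB.
apply: NNPP => nBGk; have /repI[_ freeB] := IB.
have IkB : I (k |: B).
  apply/repI; split.
    by rewrite subUset sub1set (subsetP KE) ?(subset_trans BK KE).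
  by apply/free_mod_setU; rewrite ?disjoints1 //; apply/free_mod1.
have := rk_ge (_ : k |: B \subset K) IkB; rewrite subUset sub1set kK BK => /(_ isT).
by rewrite cardsU1 kNB -rkB ltnn.
Qed.

Lemma represents_contr C : C \subset E ->
  represents (C :|: G) (E :\: C) (contr E I C).
Proof.
move=> CE X; rewrite /contr.
have basis_spanned_CG B : B \subset C -> I B -> #|B| = rk I C ->
    forall k, k \in C :|: G -> spanned (B :|: G) (v k).
  move=> BC IB rkB k /setUP[kC | kG]; first exact: basis_spanned CE BC IB rkB kC.
  by apply: spanned_gen; rewrite inE kG orbT.
split => [/andP[XEC /eqP rkXC] | [XEC freeX]].
  split => //; have [Y [YXC IY rkY]] := rk_witness (X :|: C) represents_set0.
  have IYX : I (Y :\: X) := represents_sub (subsetDl Y X) IY.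
  have YXC' : Y :\: X \subset C.
    by apply/subsetP => y /setDP[/(subsetP YXC)/setUP[] // yX /negP].
  have := subset_leq_card (subsetIr Y X); have := rk_ge YXC' IYX.
  have := cardsID X Y; rewrite rkY rkXC => YX1 YX2 YX3.
  have [YXeq rkYX] : #|Y :&: X| = #|X| /\ #|Y :\: X| = rk I C by lia.
  have XY : X \subset Y by apply/setIidPr/eqP; rewrite eqEcard subsetIr YXeq leqnn.
  have /repI[_ freeY] := IY; have /repI[_ freeYX] := IYX.
  have XYX : [disjoint X & Y :\: X] by rewrite disjoint_sym disjoints_subset subsetDr.
  apply: free_mod_spanned (basis_spanned_CG _ YXC' IYX rkYX) _.
  by apply/(free_mod_setU XYX freeYX); apply: free_modS freeY; rewrite subUset XY subsetDl.
have [B [BC IB rkB]] := rk_witness C represents_set0.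
have /repI[BE freeB] := IB.
have XB : [disjoint X & B].
  by apply: disjointWr BC _; rewrite subsetD in XEC; case/andP: XEC.
have IXB : I (X :|: B).
  apply/repI; split; first by rewrite subUset BE (subset_trans XEC (subsetDl E C)).
  by apply/(free_mod_setU XB freeB); apply: free_modW freeX; apply: setSU.
rewrite XEC eqn_leq (rk_setU_le _ _ represents_sub) /= -rkB.
by have := rk_ge (setUS X BC) IXB; rewrite cardsU (disjoint_setI0 XB) cards0 subn0.
Qed.

Lemma flat_spanned_closed F f : flat E I F -> f \in E ->
  spanned (F :|: G) (v f) -> f \in F.
Proof.
move=> [FE rkF] fE Ff; apply: contraT => fNF.
have [Y [YfF IY rkY]] := rk_witness (f |: F) represents_set0.
have ltF : (rk I F < #|Y|)%N by rewrite rkY; apply: rkF; rewrite inE fNF.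
have fY : f \in Y.
  apply: contraTT ltF => fNY; rewrite -leqNgt.
  exact: rk_ge (subsetU1_notin YfF fNY) IY.
have YfF' : Y :\ f \subset F by rewrite -(setU1K fNF) setSD.
have IYf : I (Y :\ f) := represents_sub (subsetDl Y _) IY.
have rkYf : #|Y :\ f| = rk I F.
  apply/eqP; rewrite eqn_leq rk_ge //=.
  by move: ltF; rewrite (cardsD1 f Y) fY.
have /repI[_ freeY] := IY; move: freeY; rewrite -(setD1K fY).
have fYf : [disjoint [set f] & Y :\ f] by rewrite disjoints1 !inE eqxx.
have /repI[_ freeYf] := IYf.
move/(free_mod_setU fYf freeYf)/free_mod1 => nYGf; exfalso; apply: nYGf.
apply: spanned_trans Ff => k /setUP[kF | kG].
  exact: basis_spanned FE YfF' IYf rkYf kF.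
by apply: spanned_gen; rewrite inE kG orbT.
Qed.

Lemma circuitP D : D != set0 -> circuit E I D <-> circuit_mod G E D.
Proof.
move=> D0; split => [[DE /negP nID Dmin] | [DE GD Dmin]].
  have freeProper Y : Y \proper D -> free_mod G Y by move/Dmin/repI => [].
  split => //; last by move=> Y YD; apply: (freeProper Y YD Y (subxx Y)).
  apply: NNPP => nGD; apply: nID; apply/repI; split => // Y YD GY.
  have [eqYD | neYD] := eqVneq Y D; first by case: nGD; rewrite -eqYD.
  by apply: (freeProper Y _ Y (subxx Y) GY); rewrite properEneq neYD.
split => //.
  by apply/negP => /repI[_ freeD]; case/eqP: D0; apply: freeD D (subxx D) GD.
move=> Y YD; apply/repI; split; first exact: subset_trans (proper_sub YD) DE.
by move=> Z ZY; apply: Dmin; apply: sub_proper_trans ZY YD.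
Qed.

Lemma closure_has_chord C e : circuit E I C -> e \in E :\: C -> ~ spanned G (v e) ->
  spanned (C :|: G) (v e) -> has_chord E I C.
Proof.
move=> circC eEC nGe /spannedU[A AC GeA]; have eNC := (setDP eEC).2.
have circC' := (circuitP (circuit_neq0 represents_set0 circC)).1 circC.
have [_ GC _] := circC'.
have neAC : A != C.
  by apply/eqP => eqAC; apply: nGe; rewrite eqAC in GeA; apply: spannedDl GC GeA.
have [a aA] : exists a, a \in A.
  by apply/set0Pn/eqP => A0; apply: nGe; rewrite A0 vsum0 addr0 in GeA.
have CAC : C :\: A \proper C.
  rewrite properE subsetDl /=; apply/subsetPn; exists a; first exact: (subsetP AC).
  by rewrite inE aA.
have GeCA : spanned G (v e + vsum (C :\: A)).
  by rewrite vsumD // addrA addrAC; apply: spannedD GeA GC.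
have e_ne0 B : e |: B != set0 by apply/set0Pn; exists e; apply: setU11.
exists (e |: A), (e |: (C :\: A)), e; split.
- apply/(circuitP (e_ne0 A)); apply: circuit_mod_split circC' eEC _ GeA.
  by rewrite properEneq neAC.
- exact/(circuitP (e_ne0 _))/(circuit_mod_split circC' eEC CAC GeCA).
- rewrite -setUIr (_ : A :&: (C :\: A) = set0) ?setU0 //.
  by apply/setP => x; rewrite !inE; case: (x \in A).
- by rewrite -setUUr -{1}(setIidPr AC) setID setU1K.
Qed.

Lemma chordless_circuit_flat C : simple E I -> circuit E I C -> ~ has_chord E I C ->
  flat E I C.
Proof.
move=> simpleI circC noChord; have [CE _ Cmin] := circC.
split => // e eEC; have [eE eNC] := setDP eEC; rewrite ltnNge; apply/negP => rk_eC.
apply: noChord; apply: (closure_has_chord circC eEC).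
  by apply/free_mod1; have /repI[] := simple_indep1 simpleI eE.
have [c cC] := set0Pn _ (circuit_neq0 represents_set0 circC).
have ICc : I (C :\ c) := Cmin _ (properD1 cC).
have rkCc : #|C :\ c| = rk I (e |: C).
  apply/eqP; rewrite eqn_leq rk_ge ?(subset_trans (subsetDl C _) (subsetUr _ _)) //=.
  by apply: leq_trans rk_eC _; rewrite (rk_circuit circC) // eqxx (cardsD1 c C) cC addKn.
apply: spannedS (setSU _ (subsetDl C [set c])) _.
apply: basis_spanned _ _ ICc rkCc (setU11 e C).
  by rewrite subUset sub1set eE.
exact: subset_trans (subsetDl C _) (subsetUr _ _).
Qed.

Lemma chordal_mod_flat F : flat E I F -> chordal_mod G E -> chordal_mod G F.
Proof.
move=> flatF chE D [DF GD Dmin] D4; have FE := flatF.1.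
have [f [/setDP[fE fND] fNloop fNpar fcl]] := chE D (And3 (subset_trans DF FE) GD Dmin) D4.
exists f; split => //; rewrite inE fND (flat_spanned_closed flatF fE) //.
exact: spannedS (setSU _ DF) fcl.
Qed.

Lemma chordal_mod_simplification S : simplification_set E I S ->
  chordal_mod G E -> chordal_mod G S.
Proof.
move=> [SE _ _ Sall] chE D [DS GD Dmin] D4.
have [f chf] := chE D (And3 (subset_trans DS SE) GD Dmin) D4.
have [/setDP[fE _] fNloop _ _] := chf.
suff [g gS Gfg] : exists2 g, g \in S & spanned G (v f + v g).
  by exists g; apply: chord_mod_parallel chf gS Gfg.
have [fS | fNS] := boolP (f \in S); first by exists f => //; rewrite addxx; apply: spanned0.
have fI : I [set f] by apply/repI; rewrite sub1set fE; split => //; apply/free_mod1.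
have fNl : ~ loop E I f by case=> _ /negP.
have [g gS [/and3P[_ gE fg] _ gI /negP fgNI]] := Sall f fE fNl fNS.
exists g => //; apply: NNPP => nGfg; apply: fgNI; apply/repI.
split; first by rewrite subUset !sub1set fE gE.
by apply/free_mod2 => //; split => //; have /repI[_ /free_mod1] := gI.
Qed.

Lemma isU34_not_chordal_mod : isU34 E I -> ~ chordal_mod G E.
Proof.
move=> [E4 IE] chE.
have circE : circuit E I E.
  split => //; first by rewrite IE // E4.
  by move=> D DE; rewrite IE ?(proper_sub DE) // -ltnS -E4 proper_card.
have /circuitP circE' : E != set0 by rewrite -card_gt0 E4.
have E3 : (3 < #|E|)%N by rewrite E4.
have [f [/setDP[fE fNE] _ _ _]] := chE E (circE'.1 circE) E3.
by rewrite fE in fNE.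
Qed.

Lemma chordal_mod_of_chordal : simple E I -> chordal E I -> chordal_mod G E.
Proof.
move=> simpleI chI D circD D4; have [DE _ _] := circD.
have D0 : D != set0 by rewrite -card_gt0 (leq_trans _ D4).
have [C1 [C2 [e [circ1 _ C12 DC]]]] := chI D ((circuitP D0).2 circD) D4.
have eC1 : e \in C1 by move/setP/(_ e): C12; rewrite !inE eqxx => /andP[].
have [C1E _ _] := circ1; have eE := subsetP C1E e eC1.
have eND : e \notin D by rewrite DC !inE eqxx.
exists e; split.
- by rewrite inE eND.
- by apply/free_mod1; have /repI[] := simple_indep1 simpleI eE.
- move=> d dD; have ed : e != d by apply: contraNneq eND => ->.
  have dE := subsetP DE d dD.
  by have /repI[_ /(free_mod2 _ ed)[]] := simple_indep2 simpleI eE dE ed.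
have C1_0 : C1 != set0 by apply/set0Pn; exists e.
have [_ GC1 _] := (circuitP C1_0).1 circ1.
apply/spannedU; exists (C1 :\ e); last by rewrite -vsumD1.
by rewrite DC setSD // subsetUl.
Qed.

End Represented.

Lemma chordal_mod_induced_minor G E I E' I' : represents G E I -> chordal_mod G E ->
  induced_minor E I E' I' -> exists G', represents G' E' I' /\ chordal_mod G' E'.
Proof.
move=> repI chE; elim=> [| E1 I1 F _ [G1 [rep1 ch1]] flatF
                         | E1 I1 C S _ [G1 [rep1 ch1]] CE1 simplS].
- by exists G.
- exists G1; split; first exact: (represents_restr rep1 flatF.1).
  exact: (chordal_mod_flat rep1 flatF ch1).
- have rep2 := represents_contr rep1 CE1; exists (C :|: G1); split.
    by apply: (represents_restr rep2); case: simplS.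
  exact: (chordal_mod_simplification rep2 simplS (chordal_mod_contr CE1 ch1)).
Qed.

End SubsetSums.

Section GF2VectorSpaces.
Variables (T : finType) (V : vectType 'F_2) (v : T -> V).
Implicit Types (E X : {set T}) (I : {set T} -> bool).
Local Open Scope ring_scope.

Lemma F2_cases (a : 'F_2) : a = 0 \/ a = 1.
Proof. by case: a => [[|[|m]] Hm] //; [left | right]; apply/val_inj. Qed.

Lemma memv_span_spanned (s : seq T) x :
  x \in <<map v s>>%VS <-> spanned v [set:: s] x.
Proof.
elim: s x => [|a s IHs] x /=.
  rewrite span_nil memv0 set_nil; split => [/eqP -> | [A]]; first exact: spanned0.
  by rewrite subset0 => /eqP -> ->; rewrite vsum0.
rewrite span_cons set_cons spannedU1 -!IHs; split.
  case/memv_addP => _ /vlineP[k ->] [w sw ->].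
  have [-> | ->] := F2_cases k; first by left; rewrite scale0r add0r.
  by right; rewrite scale1r addrAC addxx add0r.
case=> [sx | sxa]; apply/memv_addP.
  by exists 0; rewrite ?mem0v //; exists x; rewrite ?add0r.
exists (v a); first exact: memv_line.
by exists (x + v a); rewrite // addrC addxK.
Qed.

Lemma free_free_mod (s : seq T) : uniq s -> free (map v s) <-> free_mod v set0 [set:: s].
Proof.
elim: s => [|a s IHs] /=.
  by rewrite nil_free set_nil; split => // _; apply: free_mod0.
case/andP => aNs /IHs{}IHs; rewrite free_cons set_cons.
have a_s : [disjoint [set a] & [set:: s]] by rewrite disjoints1 inE.
split => [/andP[nsa /IHs free_s] | free_as].
  apply/(free_mod_setU a_s free_s)/free_mod1.
  by rewrite setU0 => /memv_span_spanned; exact/negP.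
have free_s : free_mod v set0 [set:: s] := free_modS (subsetUr _ _) free_as.
have /free_mod1 := (free_mod_setU a_s free_s).1 free_as; rewrite setU0 => nsa.
by rewrite (IHs.2 free_s) andbT; apply/negP => /memv_span_spanned.
Qed.

Lemma represents_free E I : (forall X, I X -> X \subset E) ->
  (forall X, X \subset E -> I X = free [seq v x | x <- enum X]) -> represents v set0 E I.
Proof.
move=> IE Ifree X; have freeX := free_free_mod (enum_uniq X); rewrite set_enum in freeX.
split => [IX | [XE /freeX]]; last by rewrite Ifree.
by have XE := IE X IX; split; rewrite // -freeX -Ifree.
Qed.

End GF2VectorSpaces.

Theorem lemma3p8 (T : finType) (E : {set T}) (I : {set T} -> bool) :
  is_matroid E I -> simple E I -> binary E I ->
  (chordal E I <->
   ~ exists (E' : {set T}) (I' : {set T} -> bool),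
       induced_minor E I E' I' /\ isU34 E' I').
Proof.
move=> [IE _ _ _] simpleI [n [v Ifree]].
have repI := represents_free IE Ifree.
split => [chI [E' [I' [minorI U34]]] | noU34 C circC C4].
  have chI' := chordal_mod_of_chordal repI simpleI chI.
  have [G [repG chG]] := chordal_mod_induced_minor repI chI' minorI.
  exact: isU34_not_chordal_mod repG U34 chG.
apply: NNPP => noChord; apply: noU34.
exact: circuit_flat_U34_minor circC C4 (chordless_circuit_flat repI simpleI circC noChord).
Qed.
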